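(* Let $0<\epsilon<1$ and $\mathcal Q=[1/\epsilon]$. Let $0<\alpha<1$ be irrational and let $\gamma=p/q<\gamma'=p'/q'$ be the two consecutive elements of $\mathcal F_{\mathcal Q}$ with $\gamma<\alpha<\gamma'$. Then: (i) if $\frac pq<\alpha<\frac{p'-\epsilon}{q'}$, then $q_{N(\alpha,\epsilon)}(\alpha)=q$ and $d_{N(\alpha,\epsilon)}(\alpha)=q\alpha-p$; (ii) if $\frac{p'-\epsilon}{q'}\le\alpha\le\frac{p+\epsilon}{q}$, then $q_{N(\alpha,\epsilon)}(\alpha)=\min(q,q')$, and $d_{N(\alpha,\epsilon)}(\alpha)=q\alpha-p$ if $q<q'$, $d_{N(\alpha,\epsilon)}(\alpha)=p'-q'\alpha$ if $q'<q$; (iii) if $\frac{p+\epsilon}{q}<\alpha<\frac{p'}{q'}$, then $q_{N(\alpha,\epsilon)}(\alpha)=q'$ and $d_{N(\alpha,\epsilon)}(\alpha)=p'-q'\alpha$.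
   Context: $\mathcal F_{\mathcal Q}=\{p/q:1\le p\le q\le\mathcal Q,\ \gcd(p,q)=1\}$ is the set of Farey fractions of order $\le\mathcal Q$. For irrational $\alpha\in(0,1)$ with continued fraction partial quotients $a_1,a_2,\dots$ (i.e. $a_n=[1/T^{n-1}\alpha]$, $T(x)=1/x-[1/x]$), define $p_0=1,p_1=0$, $q_0=0,q_1=1$, $p_{n+1}=a_np_n+p_{n-1}$, $q_{n+1}=a_nq_n+q_{n-1}$, $d_n(\alpha)=|q_n\alpha-p_n|$, and $N(\alpha,\epsilon)=\inf\{n\ge0:d_n(\alpha)\le\epsilon\}$. *)

From Stdlib Require Import Reals ZArith Arith.
Open Scope R_scope.

Definition gaussT (x : R) : R := / x - IZR (Int_part (/ x)).

Fixpoint iterT (n : nat) (x : R) : R :=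
  match n with O => x | S k => gaussT (iterT k x) end.

(* partial quotient a_n = [1 / T^{n-1} alpha], for n >= 1 *)
Definition cf_a (alpha : R) (n : nat) : Z := Int_part (/ iterT (n - 1) alpha).

(* cf_pq alpha n = ((p_n, q_n), (p_{n+1}, q_{n+1})) with
   p_0 = 1, p_1 = 0, q_0 = 0, q_1 = 1,
   p_{n+1} = a_n p_n + p_{n-1}, q_{n+1} = a_n q_n + q_{n-1}. *)
Fixpoint cf_pq (alpha : R) (n : nat) : (Z * Z) * (Z * Z) :=
  match n with
  | O => ((1%Z, 0%Z), (0%Z, 1%Z))
  | S k =>
      let '((pk, qk), (pk1, qk1)) := cf_pq alpha k in
      let a := cf_a alpha (S k) in
      ((pk1, qk1), ((a * pk1 + pk)%Z, (a * qk1 + qk)%Z))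
  end.

Definition cf_p (alpha : R) (n : nat) : Z := fst (fst (cf_pq alpha n)).
Definition cf_q (alpha : R) (n : nat) : Z := snd (fst (cf_pq alpha n)).

Definition cf_d (alpha : R) (n : nat) : R :=
  Rabs (IZR (cf_q alpha n) * alpha - IZR (cf_p alpha n)).

Definition is_N (alpha eps : R) (n : nat) : Prop :=
  cf_d alpha n <= eps /\ (forall m : nat, (m < n)%nat -> eps < cf_d alpha m).

Definition in_Farey (Q : nat) (x : R) : Prop :=
  exists a b : nat, (1 <= a)%nat /\ (a <= b)%nat /\ (b <= Q)%nat /\
    Nat.gcd a b = 1%nat /\ x = INR a / INR b.

Definition irrational (x : R) : Prop :=
  ~ (exists a b : Z, b <> 0%Z /\ x = IZR a / IZR b).

From Stdlib Require Import Reals ZArith Lia Lra Psatz Wf_nat.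
Open Scope R_scope.

(* By best approximation, q_{N(alpha,eps)} is the least b >= 1 such that |b alpha - a| <= eps
   for some integer a, and d_N is that distance.  Farey neighbours p/q < p'/q' of order
   Q = [1/eps] satisfy p'q - pq' = 1 and q + q' > Q, so q eps <= 1, q' eps <= 1 <= (q + q') eps.
   No a/b with b < q + q' lies strictly between them; hence |b alpha - a| either exceeds
   1/q >= eps (resp. 1/q'), or b >= q and |b alpha - a| >= q alpha - p (resp. b >= q' and
   |b alpha - a| >= p' - q' alpha).  As q' (q alpha - p) + q (p' - q' alpha) = 1, at least one
   of these two distances is <= eps, and the three cases say which of q, q' is the least
   admissible b. *)

Lemma Int_part_ge_1 (r : R) : 1 < r -> (1 <= Int_part r)%Z.
Proof.
  intros Hr. destruct (base_Int_part r) as [Hlo Hhi].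
  assert (Hpos : IZR 0 < IZR (Int_part r)) by (simpl; lra).
  apply lt_IZR in Hpos. lia.
Qed.

Lemma irrational_neq_0 (x : R) : irrational x -> x <> 0.
Proof. intros Hx ->. apply Hx. exists 0%Z, 1%Z. split; [lia | lra]. Qed.

Lemma irrational_inv (x : R) : irrational x -> irrational (/ x).
Proof.
  intros Hx [a [b [Hb E]]]. apply Hx.
  pose proof (irrational_neq_0 x Hx) as Hx0.
  assert (Ha : IZR a <> 0).
  { intros Ha. rewrite Ha in E. apply (Rinv_neq_0_compat x Hx0). rewrite E. field.
    now apply not_0_IZR. }
  exists b, a. split; [intros ->; now apply Ha|].
  rewrite <- (Rinv_inv x), E. field. split; [exact Ha | now apply not_0_IZR].
Qed.

Lemma irrational_sub_IZR (x : R) (k : Z) : irrational x -> irrational (x - IZR k).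
Proof.
  intros Hx [a [b [Hb E]]]. apply Hx. exists (a + k * b)%Z, b. split; [exact Hb|].
  rewrite plus_IZR, mult_IZR. apply not_0_IZR in Hb.
  replace x with (x - IZR k + IZR k) by ring. rewrite E. field. exact Hb.
Qed.

Lemma gaussT_unit (x : R) : 0 < x < 1 -> irrational x ->
  0 < gaussT x < 1 /\ irrational (gaussT x).
Proof.
  intros Hx Hirr.
  assert (Hirr' : irrational (gaussT x)) by now apply irrational_sub_IZR, irrational_inv.
  split; [|exact Hirr'].
  pose proof (irrational_neq_0 _ Hirr').
  unfold gaussT in *. destruct (base_Int_part (/ x)). lra.
Qed.

Lemma irrational_dist_neq_half (x : R) (a b : Z) : irrational x -> b <> 0%Z ->
  Rabs (IZR b * x - IZR a) <> 1 / 2.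
Proof.
  intros Hx Hb E. apply Hx. pose proof (not_0_IZR b Hb) as Hb'.
  destruct (Rcase_abs (IZR b * x - IZR a)) as [Hneg | Hpos].
  - rewrite Rabs_left in E by exact Hneg.
    exists (2 * a - 1)%Z, (2 * b)%Z. split; [lia|].
    rewrite minus_IZR, !mult_IZR. field_simplify_eq; [lra | exact Hb'].
  - rewrite Rabs_right in E by exact Hpos.
    exists (2 * a + 1)%Z, (2 * b)%Z. split; [lia|].
    rewrite plus_IZR, !mult_IZR. field_simplify_eq; [lra | exact Hb'].
Qed.

(* Irrationality excludes the tie |b x - a| = 1/2. *)
Lemma IZR_eq_of_close (x eps : R) (a a' b : Z) : irrational x -> b <> 0%Z -> eps <= 1 / 2 ->
  Rabs (IZR b * x - IZR a) <= eps -> Rabs (IZR b * x - IZR a') <= eps -> a = a'.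
Proof.
  intros Hx Hb Heps Ha Ha'.
  pose proof (irrational_dist_neq_half x a b Hx Hb).
  destruct (Z.eq_dec a a') as [|Hne]; [assumption|exfalso].
  assert (Hgap : 1 <= Rabs (IZR a - IZR a')).
  { rewrite <- minus_IZR, <- abs_IZR. apply IZR_le. lia. }
  replace (IZR a - IZR a') with (- (IZR b * x - IZR a) + (IZR b * x - IZR a')) in Hgap by ring.
  pose proof (Rabs_triang (- (IZR b * x - IZR a)) (IZR b * x - IZR a')).
  rewrite Rabs_Ropp in *. lra.
Qed.

Section ContinuedFraction.

Variable alpha : R.
Hypothesis Halpha : 0 < alpha < 1.
Hypothesis Hirr : irrational alpha.

Definition cf_err (n : nat) : R := IZR (cf_q alpha n) * alpha - IZR (cf_p alpha n).

Lemma cf_d_err n : cf_d alpha n = Rabs (cf_err n).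
Proof. reflexivity. Qed.

Lemma iterT_unit n : 0 < iterT n alpha < 1 /\ irrational (iterT n alpha).
Proof.
  induction n as [|n [Ht Hti]]; [easy|].
  now apply gaussT_unit.
Qed.

Lemma cf_a_S n : cf_a alpha (S n) = Int_part (/ iterT n alpha).
Proof. unfold cf_a. now rewrite Nat.sub_1_r. Qed.

Lemma cf_a_ge_1 n : (1 <= cf_a alpha (S n))%Z.
Proof.
  rewrite cf_a_S. destruct (iterT_unit n) as [Ht _].
  apply Int_part_ge_1. rewrite <- Rinv_1. apply Rinv_lt_contravar; lra.
Qed.

Lemma cf_p_SS n :
  cf_p alpha (S (S n)) = (cf_a alpha (S n) * cf_p alpha (S n) + cf_p alpha n)%Z.
Proof. unfold cf_p. simpl. now destruct (cf_pq alpha n) as [[? ?] [? ?]]. Qed.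

Lemma cf_q_SS n :
  cf_q alpha (S (S n)) = (cf_a alpha (S n) * cf_q alpha (S n) + cf_q alpha n)%Z.
Proof. unfold cf_q. simpl. now destruct (cf_pq alpha n) as [[? ?] [? ?]]. Qed.

Lemma cf_q_ge_1 n : (1 <= cf_q alpha (S n))%Z.
Proof.
  enough (H : (0 <= cf_q alpha n /\ 1 <= cf_q alpha (S n))%Z) by apply H.
  induction n as [|n IH]; [unfold cf_q; simpl; lia|].
  rewrite cf_q_SS. pose proof (cf_a_ge_1 n). nia.
Qed.

Definition cf_det (n : nat) : Z :=
  cf_p alpha (S n) * cf_q alpha n - cf_p alpha n * cf_q alpha (S n).

Lemma cf_det_sqr n : (cf_det n * cf_det n = 1)%Z.
Proof.
  induction n as [|n IH]; [unfold cf_det, cf_p, cf_q; simpl; lia|].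
  unfold cf_det in *. rewrite cf_p_SS, cf_q_SS. lia.
Qed.

Lemma cf_err_SS n :
  cf_err (S (S n)) = IZR (cf_a alpha (S n)) * cf_err (S n) + cf_err n.
Proof. unfold cf_err. rewrite cf_p_SS, cf_q_SS, !plus_IZR, !mult_IZR. ring. Qed.

Lemma cf_err_S n : cf_err (S n) = - cf_err n * iterT n alpha.
Proof.
  induction n as [|n IH]; [unfold cf_err, cf_q, cf_p; simpl; ring|].
  destruct (iterT_unit n) as [Ht _].
  assert (Hprev : cf_err n = - cf_err (S n) / iterT n alpha) by (rewrite IH; field; lra).
  rewrite cf_err_SS, Hprev, cf_a_S. simpl iterT. unfold gaussT. field. lra.
Qed.

Lemma cf_d_0 : cf_d alpha 0 = 1.
Proof.
  unfold cf_d, cf_q, cf_p. simpl.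
  rewrite Rmult_0_l, Rminus_0_l, Rabs_Ropp. apply Rabs_R1.
Qed.

Lemma cf_d_S n : cf_d alpha (S n) = cf_d alpha n * iterT n alpha.
Proof.
  rewrite !cf_d_err, cf_err_S, Rabs_mult, Rabs_Ropp.
  destruct (iterT_unit n) as [Ht _]. now rewrite (Rabs_right (iterT n alpha)) by lra.
Qed.

Lemma cf_d_pos n : 0 < cf_d alpha n.
Proof.
  induction n as [|n IH]; [rewrite cf_d_0; lra|].
  rewrite cf_d_S. destruct (iterT_unit n) as [Ht _]. apply Rmult_lt_0_compat; lra.
Qed.

(* With a = [1/t] >= 1, t T(t) = 1 - a t <= min (t, 1 - t) <= 1/2. *)
Lemma iterT_mul_S_le_half n : iterT n alpha * iterT (S n) alpha <= 1 / 2.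
Proof.
  destruct (iterT_unit n) as [Ht _]. destruct (iterT_unit (S n)) as [HtS _].
  pose proof (cf_a_ge_1 n) as Ha. rewrite cf_a_S in Ha. apply IZR_le in Ha.
  simpl iterT in *. unfold gaussT in *. set (t := iterT n alpha) in *.
  assert (E : t * (/ t - IZR (Int_part (/ t))) = 1 - t * IZR (Int_part (/ t))) by (field; lra).
  rewrite E. destruct (Rle_dec t (1 / 2)); nra.
Qed.

Lemma cf_d_double_le n : cf_d alpha (2 * n) <= (1 / 2) ^ n.
Proof.
  induction n as [|n IH]; [simpl; rewrite cf_d_0; lra|].
  replace (2 * S n)%nat with (S (S (2 * n))) by lia.
  rewrite !cf_d_S, Rmult_assoc. simpl pow.
  pose proof (iterT_mul_S_le_half (2 * n)). pose proof (cf_d_pos (2 * n)).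
  destruct (iterT_unit (2 * n)) as [Ht _]. destruct (iterT_unit (S (2 * n))) as [HtS _].
  nra.
Qed.

Lemma is_N_exists eps : 0 < eps -> exists n, is_N alpha eps n.
Proof.
  intros Heps.
  destruct (pow_lt_1_zero (1 / 2) ltac:(rewrite Rabs_right; lra) eps Heps) as [k Hk].
  specialize (Hk k (le_n k)). rewrite Rabs_right in Hk by (apply Rle_ge, pow_le; lra).
  destruct (dec_inh_nat_subset_has_unique_least_element (fun n => cf_d alpha n <= eps))
    as [n [[Hn Hleast] _]].
  - intros n. destruct (Rle_dec (cf_d alpha n) eps); tauto.
  - exists (2 * k)%nat. pose proof (cf_d_double_le k). lra.
  - exists n. split; [exact Hn|]. intros m Hm. apply Rnot_le_lt. intros Hle.
    specialize (Hleast m Hle). lia.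
Qed.

Lemma cf_coords n (a b : Z) : exists x y : Z,
  a = (x * cf_p alpha n + y * cf_p alpha (S n))%Z /\
  b = (x * cf_q alpha n + y * cf_q alpha (S n))%Z.
Proof.
  pose proof (cf_det_sqr n) as HD.
  exists (- cf_det n * (a * cf_q alpha (S n) - b * cf_p alpha (S n)))%Z,
         (- cf_det n * (cf_p alpha n * b - cf_q alpha n * a))%Z.
  split.
  - transitivity (cf_det n * cf_det n * a)%Z; [rewrite HD; ring | unfold cf_det; ring].
  - transitivity (cf_det n * cf_det n * b)%Z; [rewrite HD; ring | unfold cf_det; ring].
Qed.

(* Writing (a, b) in the unimodular basis (p_n, q_n), (p_{n+1}, q_{n+1}) gives
   b alpha - a = err_n (x - y T^n alpha) with x, y of opposite signs and x <> 0. *)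
Lemma cf_best_approx n (a b : Z) : (1 <= n)%nat -> (1 <= b < cf_q alpha (S n))%Z ->
  cf_d alpha n <= Rabs (IZR b * alpha - IZR a).
Proof.
  intros Hn Hb.
  destruct (cf_coords n a b) as [x [y [-> ->]]].
  assert (Hqn : (1 <= cf_q alpha n)%Z) by (destruct n; [lia | apply cf_q_ge_1]).
  assert (Hsign : (1 <= x /\ y <= 0)%Z \/ (x <= -1 /\ 0 <= y)%Z).
  { pose proof (cf_q_ge_1 n).
    destruct (Z.lt_trichotomy y 0) as [Hy | [Hy | Hy]]; [|subst y|]; nia. }
  assert (E : IZR (x * cf_q alpha n + y * cf_q alpha (S n)) * alpha
              - IZR (x * cf_p alpha n + y * cf_p alpha (S n))
            = cf_err n * (IZR x - IZR y * iterT n alpha)).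
  { rewrite !plus_IZR, !mult_IZR.
    transitivity (IZR x * cf_err n + IZR y * cf_err (S n)); [unfold cf_err; ring|].
    rewrite cf_err_S. ring. }
  rewrite E, Rabs_mult, <- cf_d_err.
  destruct (iterT_unit n) as [Ht _]. pose proof (cf_d_pos n).
  enough (1 <= Rabs (IZR x - IZR y * iterT n alpha)) by nra.
  destruct Hsign as [[Hx Hy] | [Hx Hy]]; apply IZR_le in Hx, Hy.
  - rewrite Rabs_right; nra.
  - rewrite Rabs_left1; nra.
Qed.

Lemma cf_q_bracket (b : Z) N : (1 <= b < cf_q alpha N)%Z ->
  exists n, (1 <= n < N)%nat /\ (cf_q alpha n <= b < cf_q alpha (S n))%Z.
Proof.
  induction N as [|N IH]; intros Hb; [unfold cf_q in Hb; simpl in Hb; lia|].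
  destruct (Z_le_gt_dec (cf_q alpha N) b) as [Hle | Hgt].
  - destruct N as [|N]; [unfold cf_q in Hb; simpl in Hb; lia|].
    exists (S N). split; lia.
  - destruct (IH ltac:(lia)) as [n [Hn Hqn]]. exists n. split; [lia | exact Hqn].
Qed.

Lemma is_N_ge_1 eps n : eps < 1 -> is_N alpha eps n -> (1 <= n)%nat.
Proof. intros Heps [Hn _]. destruct n; [rewrite cf_d_0 in Hn; lra | lia]. Qed.

(* A larger q_N would put b0 in some bracket [q_m, q_{m+1}) with m < N, and best approximation
   would give d_m <= eps. *)
Lemma is_N_cf_q eps n (a0 b0 : Z) : 0 < eps <= 1 / 2 -> is_N alpha eps n ->
  (1 <= b0)%Z -> Rabs (IZR b0 * alpha - IZR a0) <= eps ->
  (forall a b : Z, (1 <= b < b0)%Z -> eps < Rabs (IZR b * alpha - IZR a)) ->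
  cf_q alpha n = b0 /\ cf_d alpha n = Rabs (IZR b0 * alpha - IZR a0).
Proof.
  intros Heps HN Hb0 Ha0 Hbelow.
  pose proof (is_N_ge_1 eps n ltac:(lra) HN) as Hn.
  destruct HN as [Hdn Hmin].
  assert (Hqn : (1 <= cf_q alpha n)%Z) by (destruct n; [lia | apply cf_q_ge_1]).
  assert (Eq : cf_q alpha n = b0).
  { destruct (Z.lt_trichotomy (cf_q alpha n) b0) as [Hlt | [Heq | Hgt]]; [|exact Heq|].
    - specialize (Hbelow (cf_p alpha n) _ (conj Hqn Hlt)). unfold cf_d in Hdn. lra.
    - destruct (cf_q_bracket b0 n ltac:(lia)) as [m [Hm Hqm]].
      pose proof (cf_best_approx m a0 b0 ltac:(lia) ltac:(lia)).
      specialize (Hmin m ltac:(lia)). lra. }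
  split; [exact Eq|].
  unfold cf_d in *. rewrite Eq in *.
  now rewrite (IZR_eq_of_close alpha eps (cf_p alpha n) a0 b0 Hirr ltac:(lia)).
Qed.

End ContinuedFraction.

Lemma mediant_bound (a b c d e f : Z) : (0 < b)%Z -> (0 < f)%Z ->
  (a * d < c * b)%Z -> (c * f < e * d)%Z -> (b + f <= d * (e * b - a * f))%Z.
Proof.
  intros Hb Hf Hl Hr.
  replace (d * (e * b - a * f))%Z with (b * (e * d - c * f) + f * (c * b - a * d))%Z by ring.
  nia.
Qed.

Lemma coprime_cross_eq_den (a b c d : nat) : Nat.gcd a b = 1%nat -> Nat.gcd c d = 1%nat ->
  (a * d = c * b)%nat -> b = d.
Proof.
  intros Hab Hcd E. apply Nat.divide_antisym.
  - apply (Nat.gauss b a d); [exists c; lia | now rewrite Nat.gcd_comm].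
  - apply (Nat.gauss d c b); [exists a; lia | now rewrite Nat.gcd_comm].
Qed.

Lemma Zgcd_of_nat_eq_1 (p q : nat) : (0 < q)%nat -> Nat.gcd p q = 1%nat ->
  Z.gcd (Z.of_nat p) (Z.of_nat q) = 1%Z.
Proof.
  intros Hq Hpq. destruct (Nat.gcd_bezout_pos q p Hq) as [u [v Huv]].
  rewrite Nat.gcd_comm, Hpq in Huv.
  apply Z.bezout_1_gcd. exists (- Z.of_nat v)%Z, (Z.of_nat u). lia.
Qed.

Lemma coprime_den_le (P Q a b : Z) : Z.gcd P Q = 1%Z -> (0 < b)%Z ->
  (a * Q = b * P)%Z -> (Q <= b)%Z.
Proof.
  intros Hcop Hb E. apply Z.divide_pos_le; [exact Hb|].
  apply (Z.gauss Q P b); [exists a; lia | now rewrite Z.gcd_comm].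
Qed.

Lemma shift_into_window (u0 v0 p q Q : Z) : (0 < q)%Z -> (u0 * q = 1 + v0 * p)%Z ->
  exists u v : Z, (u * q = 1 + v * p)%Z /\ (Q - q < v <= Q)%Z.
Proof.
  intros Hq E. set (t := ((Q - v0) / q)%Z).
  pose proof (Z.div_mod (Q - v0) q ltac:(lia)). pose proof (Z.mod_pos_bound (Q - v0) q Hq).
  exists (u0 + p * t)%Z, (v0 + q * t)%Z. split; [nia | lia].
Qed.

(* The window Q - q < v <= Q yields a fraction u/v of order <= Q just right of p/q; it must be
   p'/q', otherwise the mediant bound would force q' >= q + v > Q. *)
Lemma farey_neighbours (Q p q p' q' : nat) :
  (p < q)%nat -> (q <= Q)%nat -> (q' <= Q)%nat ->
  Nat.gcd p q = 1%nat -> Nat.gcd p' q' = 1%nat -> (p * q' < p' * q)%nat ->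
  (forall u v : nat, (1 <= u <= v)%nat -> (v <= Q)%nat -> Nat.gcd u v = 1%nat ->
     ~ (p * v < u * q /\ u * q' < p' * v)%nat) ->
  (p' * q = 1 + p * q')%nat /\ (Q < q + q')%nat.
Proof.
  intros Hpq HqQ Hq'Q Hcop Hcop' Hlt Hnone.
  destruct (Nat.gcd_bezout_pos q p ltac:(lia)) as [u0 [v0 Hb]].
  rewrite Nat.gcd_comm, Hcop in Hb.
  destruct (shift_into_window (Z.of_nat u0) (Z.of_nat v0) (Z.of_nat p) (Z.of_nat q)
              (Z.of_nat Q) ltac:(lia) ltac:(lia)) as [uz [vz [Huvz Hvz]]].
  assert (Huv_pos : (1 <= uz <= vz)%Z) by nia.
  set (u := Z.to_nat uz). set (v := Z.to_nat vz).
  assert (Huv : (u * q = 1 + v * p)%nat) by lia.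
  assert (Hcopuv : Nat.gcd u v = 1%nat) by (apply Nat.bezout_1_gcd; exists q, p; lia).
  assert (Hle : (p' * v <= u * q')%nat).
  { destruct (Nat.le_gt_cases (p' * v) (u * q')) as [Hle | Hgt]; [exact Hle | exfalso].
    apply (Hnone u v); [lia | lia | exact Hcopuv | lia]. }
  assert (Heq : (u * q' = p' * v)%nat).
  { destruct (Nat.lt_ge_cases (p' * v) (u * q')) as [Hgt | Hge]; [exfalso | lia].
    pose proof (mediant_bound (Z.of_nat p) (Z.of_nat q) (Z.of_nat p') (Z.of_nat q')
                  (Z.of_nat u) (Z.of_nat v) ltac:(lia) ltac:(lia) ltac:(lia) ltac:(lia)).
    nia. }
  pose proof (coprime_cross_eq_den u v p' q' Hcopuv Hcop' Heq) as Hvq.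
  assert (u = p') by (subst v; nia).
  split; lia.
Qed.

Lemma Rdiv_lt_iff (a b c : R) : 0 < c -> (a / c < b <-> a < b * c).
Proof. intros Hc. assert (a / c * c = a) by (field; lra). split; intros; nra. Qed.

Lemma Rlt_div_iff (a b c : R) : 0 < c -> (a < b / c <-> a * c < b).
Proof. intros Hc. assert (b / c * c = b) by (field; lra). split; intros; nra. Qed.

Lemma Rdiv_le_iff (a b c : R) : 0 < c -> (a / c <= b <-> a <= b * c).
Proof. intros Hc. assert (a / c * c = a) by (field; lra). split; intros; nra. Qed.

Lemma Rle_div_iff (a b c : R) : 0 < c -> (a <= b / c <-> a * c <= b).
Proof. intros Hc. assert (b / c * c = b) by (field; lra). split; intros; nra. Qed.

Lemma INR_div_lt_iff (a b c d : nat) : (0 < b)%nat -> (0 < d)%nat ->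
  INR a / INR b < INR c / INR d <-> (a * d < c * b)%nat.
Proof.
  intros Hb Hd. apply lt_0_INR in Hb, Hd.
  rewrite Rdiv_lt_iff, <- Rmult_div_swap, Rlt_div_iff, <- !mult_INR by assumption.
  split; [apply INR_lt | apply lt_INR].
Qed.

Lemma no_farey_between_nat (Q p q p' q' : nat) : (1 <= q)%nat -> (1 <= q')%nat ->
  (forall x, in_Farey Q x -> ~ (INR p / INR q < x < INR p' / INR q')) ->
  forall u v : nat, (1 <= u <= v)%nat -> (v <= Q)%nat -> Nat.gcd u v = 1%nat ->
  ~ (p * v < u * q /\ u * q' < p' * v)%nat.
Proof.
  intros Hq Hq' Hnone u v Huv HvQ Hcop [Hl Hr]. apply (Hnone (INR u / INR v)).
  - exists u, v. repeat split; lia.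
  - split; apply INR_div_lt_iff; lia.
Qed.

Lemma floor_inv_mul_bounds (eps : R) : 0 < eps < 1 ->
  let Q := Z.to_nat (Int_part (/ eps)) in INR Q * eps <= 1 < (INR Q + 1) * eps.
Proof.
  intros Heps Q.
  assert (Hk : (1 <= Int_part (/ eps))%Z).
  { apply Int_part_ge_1. rewrite <- Rinv_1. apply Rinv_lt_contravar; lra. }
  assert (EQ : INR Q = IZR (Int_part (/ eps)))
    by (unfold Q; rewrite INR_IZR_INZ, Z2Nat.id by lia; reflexivity).
  destruct (base_Int_part (/ eps)) as [Hlo Hhi].
  assert (Hinv : / eps * eps = 1) by (field; lra).
  rewrite EQ. split; nra.
Qed.

(* Q (b x - a) = b (Q x - P) + (b P - a Q): the last term is either >= 1, or 0 and then Q | b. *)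
Lemma dist_one_side (x eps : R) (P Q a b : Z) : (1 <= Q)%Z -> (1 <= b)%Z ->
  Z.gcd P Q = 1%Z -> IZR Q * eps <= 1 -> 0 < IZR Q * x - IZR P -> (a * Q <= b * P)%Z ->
  eps < Rabs (IZR b * x - IZR a) \/
  ((Q <= b)%Z /\ IZR Q * x - IZR P <= Rabs (IZR b * x - IZR a)).
Proof.
  intros HQ Hb Hcop Heps Hx Hside.
  assert (Id : IZR Q * (IZR b * x - IZR a)
               = IZR b * (IZR Q * x - IZR P) + IZR (b * P - a * Q)).
  { rewrite minus_IZR, !mult_IZR. ring. }
  pose proof (IZR_le _ _ HQ) as HQR. pose proof (IZR_le _ _ Hb) as HbR.
  destruct (Z.eq_dec (a * Q) (b * P)) as [E | Hne].
  - right. pose proof (coprime_den_le P Q a b Hcop ltac:(lia) E) as HQb.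
    split; [exact HQb|]. apply IZR_le in HQb.
    replace (b * P - a * Q)%Z with 0%Z in Id by lia.
    eapply Rle_trans; [|apply Rle_abs]. nra.
  - left. assert (Hgap : 1 <= IZR (b * P - a * Q)) by (apply IZR_le; lia).
    eapply Rlt_le_trans; [|apply Rle_abs]. nra.
Qed.

Section FareyNeighbours.

Variables (alpha eps : R) (p q p' q' : nat).
Hypothesis Halpha : 0 < alpha < 1.
Hypothesis Hirr : irrational alpha.
Hypothesis Hq : (1 <= q)%nat.
Hypothesis Hq' : (1 <= q')%nat.
Hypothesis Hcop : Nat.gcd p q = 1%nat.
Hypothesis Hcop' : Nat.gcd p' q' = 1%nat.
Hypothesis Hdet : (p' * q = 1 + p * q')%nat.
Hypothesis Hleft : 0 < INR q * alpha - INR p.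
Hypothesis Hright : 0 < INR p' - INR q' * alpha.
Hypothesis Heps : 0 < eps <= 1 / 2.
Hypothesis Heps_q : INR q * eps <= 1.
Hypothesis Heps_q' : INR q' * eps <= 1.
Hypothesis Heps_sum : 1 <= (INR q + INR q') * eps.

Lemma dist_sum_eq_1 :
  INR q' * (INR q * alpha - INR p) + INR q * (INR p' - INR q' * alpha) = 1.
Proof.
  transitivity (INR (p' * q) - INR (p * q')); [rewrite !mult_INR; ring|].
  rewrite Hdet, plus_INR. simpl. ring.
Qed.

Lemma dist_small_den (a b : Z) : (1 <= b < Z.of_nat q + Z.of_nat q')%Z ->
  eps < Rabs (IZR b * alpha - IZR a) \/
  ((Z.of_nat q <= b)%Z /\ INR q * alpha - INR p <= Rabs (IZR b * alpha - IZR a)) \/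
  ((Z.of_nat q' <= b)%Z /\ INR p' - INR q' * alpha <= Rabs (IZR b * alpha - IZR a)).
Proof.
  intros Hb.
  assert (Hside : (a * Z.of_nat q <= b * Z.of_nat p \/ b * Z.of_nat p' <= a * Z.of_nat q')%Z).
  { destruct (Z_le_gt_dec (a * Z.of_nat q) (b * Z.of_nat p)) as [|Hl]; [now left|].
    destruct (Z_le_gt_dec (b * Z.of_nat p') (a * Z.of_nat q')) as [|Hr]; [now right|].
    pose proof (mediant_bound (Z.of_nat p) (Z.of_nat q) a b (Z.of_nat p') (Z.of_nat q')
                  ltac:(lia) ltac:(lia) ltac:(lia) ltac:(lia)).
    nia. }
  rewrite !INR_IZR_INZ in *.
  destruct Hside as [Hside | Hside].
  - destruct (dist_one_side alpha eps (Z.of_nat p) (Z.of_nat q) a b ltac:(lia) ltac:(lia)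
                (Zgcd_of_nat_eq_1 p q ltac:(lia) Hcop) Heps_q Hleft Hside); tauto.
  - pose proof (dist_one_side (- alpha) eps (- Z.of_nat p') (Z.of_nat q') (- a) b
      ltac:(lia) ltac:(lia) ltac:(rewrite Z.gcd_opp_l; apply Zgcd_of_nat_eq_1; lia)
      Heps_q' ltac:(rewrite opp_IZR; lra) ltac:(lia)) as Hdist.
    rewrite !opp_IZR in Hdist.
    replace (IZR b * - alpha - - IZR a) with (- (IZR b * alpha - IZR a)) in Hdist by ring.
    replace (IZR (Z.of_nat q') * - alpha - - IZR (Z.of_nat p'))
      with (IZR (Z.of_nat p') - IZR (Z.of_nat q') * alpha) in Hdist by ring.
    rewrite Rabs_Ropp in Hdist. tauto.
Qed.

Lemma is_N_left :
  (INR q * alpha - INR p <= eps /\ (q <= q')%nat) \/ eps < INR p' - INR q' * alpha ->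
  exists n, is_N alpha eps n /\ IZR (cf_q alpha n) = INR q /\
            cf_d alpha n = INR q * alpha - INR p.
Proof.
  intros Hcase.
  assert (Hclose : INR q * alpha - INR p <= eps).
  { destruct Hcase as [[Hclose _] | Hfar]; [exact Hclose|].
    pose proof dist_sum_eq_1. pose proof (le_INR 1 q Hq). pose proof (le_INR 1 q' Hq').
    simpl in *. nra. }
  assert (Hbelow : forall a b : Z, (1 <= b < Z.of_nat q)%Z ->
                    eps < Rabs (IZR b * alpha - IZR a)).
  { intros a b Hb. destruct (dist_small_den a b ltac:(lia)) as [|[|]]; [easy | lia |].
    destruct Hcase as [[_ ?] | ?]; [lia | lra]. }
  assert (Hdist : Rabs (IZR (Z.of_nat q) * alpha - IZR (Z.of_nat p)) = INR q * alpha - INR p)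
    by (rewrite <- !INR_IZR_INZ; apply Rabs_right; lra).
  destruct (is_N_exists alpha Halpha Hirr eps ltac:(lra)) as [n Hn].
  destruct (is_N_cf_q alpha Halpha Hirr eps n (Z.of_nat p) (Z.of_nat q) Heps Hn ltac:(lia)
              ltac:(lra) Hbelow) as [Hqn Hdn].
  exists n. split; [exact Hn|]. rewrite Hqn, Hdn, Hdist, <- INR_IZR_INZ. easy.
Qed.

Lemma is_N_right :
  (INR p' - INR q' * alpha <= eps /\ (q' <= q)%nat) \/ eps < INR q * alpha - INR p ->
  exists n, is_N alpha eps n /\ IZR (cf_q alpha n) = INR q' /\
            cf_d alpha n = INR p' - INR q' * alpha.
Proof.
  intros Hcase.
  assert (Hclose : INR p' - INR q' * alpha <= eps).
  { destruct Hcase as [[Hclose _] | Hfar]; [exact Hclose|].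
    pose proof dist_sum_eq_1. pose proof (le_INR 1 q Hq). pose proof (le_INR 1 q' Hq').
    simpl in *. nra. }
  assert (Hbelow : forall a b : Z, (1 <= b < Z.of_nat q')%Z ->
                    eps < Rabs (IZR b * alpha - IZR a)).
  { intros a b Hb. destruct (dist_small_den a b ltac:(lia)) as [|[|]]; [easy | | lia].
    destruct Hcase as [[_ ?] | ?]; [lia | lra]. }
  assert (Hdist : Rabs (IZR (Z.of_nat q') * alpha - IZR (Z.of_nat p')) = INR p' - INR q' * alpha)
    by (rewrite <- !INR_IZR_INZ, Rabs_minus_sym; apply Rabs_right; lra).
  destruct (is_N_exists alpha Halpha Hirr eps ltac:(lra)) as [n Hn].
  destruct (is_N_cf_q alpha Halpha Hirr eps n (Z.of_nat p') (Z.of_nat q') Heps Hn ltac:(lia)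
              ltac:(lra) Hbelow) as [Hqn Hdn].
  exists n. split; [exact Hn|]. rewrite Hqn, Hdn, Hdist, <- INR_IZR_INZ. easy.
Qed.

Lemma is_N_min : INR q * alpha - INR p <= eps -> INR p' - INR q' * alpha <= eps ->
  exists n, is_N alpha eps n /\ IZR (cf_q alpha n) = INR (Nat.min q q') /\
    ((q < q')%nat -> cf_d alpha n = INR q * alpha - INR p) /\
    ((q' < q)%nat -> cf_d alpha n = INR p' - INR q' * alpha).
Proof.
  intros Hx Hy. destruct (Nat.le_gt_cases q q') as [Hle | Hgt].
  - destruct is_N_left as [n [Hn [Hqn Hdn]]]; [left; split; assumption|].
    exists n. rewrite Nat.min_l by exact Hle.
    split; [exact Hn | split; [exact Hqn | split; intros; [exact Hdn | lia]]].
  - destruct is_N_right as [n [Hn [Hqn Hdn]]]; [left; split; [assumption | lia]|].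
    exists n. rewrite Nat.min_r by lia.
    split; [exact Hn | split; [exact Hqn | split; intros; [lia | exact Hdn]]].
Qed.

End FareyNeighbours.

Theorem lemma5p1 (eps alpha : R) (p q p' q' : nat) :
  0 < eps < 1 ->
  0 < alpha < 1 ->
  irrational alpha ->
  let Q := Z.to_nat (Int_part (/ eps)) in
  (1 <= p)%nat -> (p <= q)%nat -> (q <= Q)%nat -> Nat.gcd p q = 1%nat ->
  (1 <= p')%nat -> (p' <= q')%nat -> (q' <= Q)%nat -> Nat.gcd p' q' = 1%nat ->
  INR p / INR q < alpha < INR p' / INR q' ->
  (forall x, in_Farey Q x -> ~ (INR p / INR q < x < INR p' / INR q')) ->
  ((alpha < (INR p' - eps) / INR q' ->
    exists n, is_N alpha eps n /\ IZR (cf_q alpha n) = INR q /\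
              cf_d alpha n = INR q * alpha - INR p) /\
   ((INR p' - eps) / INR q' <= alpha <= (INR p + eps) / INR q ->
    exists n, is_N alpha eps n /\ IZR (cf_q alpha n) = INR (Nat.min q q') /\
              ((q < q')%nat -> cf_d alpha n = INR q * alpha - INR p) /\
              ((q' < q)%nat -> cf_d alpha n = INR p' - INR q' * alpha)) /\
   ((INR p + eps) / INR q < alpha ->
    exists n, is_N alpha eps n /\ IZR (cf_q alpha n) = INR q' /\
              cf_d alpha n = INR p' - INR q' * alpha)).
Proof.
  intros Heps Halpha Hirr Q Hp Hpq HqQ Hcop Hp' Hpq' Hq'Q Hcop' [Hlo Hhi] Hnone.
  pose proof (floor_inv_mul_bounds eps Heps) as [HQeps HQeps1]; fold Q in HQeps, HQeps1.
  assert (Hq : (1 <= q)%nat) by lia. assert (Hq' : (1 <= q')%nat) by lia.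
  assert (Hcross : (p * q' < p' * q)%nat) by (apply INR_div_lt_iff; lia || lra).
  destruct (farey_neighbours Q p q p' q' ltac:(nia) HqQ Hq'Q Hcop Hcop' Hcross
              (no_farey_between_nat Q p q p' q' Hq Hq' Hnone)) as [Hdet HQ].
  assert (HQR : INR Q + 1 <= INR q + INR q')
    by (rewrite <- S_INR, <- plus_INR; apply le_INR; lia).
  assert (Hq2 : 2 <= INR q) by (apply (le_INR 2); nia).
  pose proof (le_INR _ _ HqQ). pose proof (le_INR _ _ Hq'Q).
  assert (Hpos' : 0 < INR q') by (apply (lt_INR 0); lia).
  assert (Hleft : 0 < INR q * alpha - INR p) by (rewrite Rdiv_lt_iff in Hlo; lra).
  assert (Hright : 0 < INR p' - INR q' * alpha) by (rewrite Rlt_div_iff in Hhi; lra).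
  assert (Heps' : 0 < eps <= 1 / 2) by nra.
  assert (Heps_q : INR q * eps <= 1) by nra. assert (Heps_q' : INR q' * eps <= 1) by nra.
  assert (Heps_sum : 1 <= (INR q + INR q') * eps) by nra.
  split; [|split].
  - rewrite Rlt_div_iff by exact Hpos'. intros Hc.
    apply (is_N_left alpha eps p q p' q'); try assumption. right. lra.
  - rewrite Rdiv_le_iff, Rle_div_iff by lra. intros [Hc Hc'].
    apply (is_N_min alpha eps p q p' q'); try assumption; lra.
  - rewrite Rdiv_lt_iff by lra. intros Hc.
    apply (is_N_right alpha eps p q p' q'); try assumption. right. lra.
Qed.
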